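(* Let $q$ be a prime power and use the setting of the context. Then the code $\mathcal C=\bigcup_{i=0}^{q^2+q}\mathcal G_i$ is an orbit code: there is a subgroup of ${\rm PGL}(6,q)$ of order $(q^3-1)(q^2+q+1)$ leaving $\mathcal C$ invariant and acting transitively on its planes.
   Context: In ${\rm PG}(5,q)$ points are row vectors ${\bf X}=(X_1,\dots,X_6)$ with matrices acting on the right; write $X=(X_1,X_2,X_3)$, $Y=(X_4,X_5,X_6)$. Let $\pi_1$ be the plane $X_1=X_2=X_3=0$ and $\pi_2$ the plane $X_4=X_5=X_6=0$. Let $A$ be a Singer cycle of ${\rm GL}(3,q)$ (a $3\times3$ matrix of multiplicative order $q^3-1$). For $0\le i\le q^2+q$ let $\mathcal Q_i$ be the quadric with quadratic form $XA^iY^T$; each is a non-degenerate hyperbolic quadric containing $\pi_1,\pi_2$. Its planes fall into two classes (planes in the same class meet in one point), with $\pi_1,\pi_2$ in different classes. $\mathcal G_i$ is the set of the $q^3-1$ planes of $\mathcal Q_i$ in the class of $\pi_1$, distinct from $\pi_1$ and disjoint from $\pi_2$. An orbit code is a constant-dimension code admitting an automorphism group (a group of collineations preserving it) whose members form a single orbit under that group. *)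

From HB Require Import structures.
From mathcomp Require Import all_boot all_order all_algebra all_fingroup.
Set Implicit Arguments. Unset Strict Implicit. Unset Printing Implicit Defensive.
Import GRing.Theory.
Local Open Scope ring_scope.

(* PG(5,q) over a finite field F: vectors are row vectors 'rV[F]_(3+3),
   written (X,Y) with X = lsubmx, Y = rsubmx.  A subspace of F^6 is
   represented canonically by a square matrix equal to its own <<_>>%MS. *)

Section Defs.
Variable F : finFieldType.

Definition qF : nat := #|F|.

Definition singer_cycle (A : 'M[F]_3) : Prop :=
  A \in unitmx /\ A ^+ (qF ^ 3 - 1) = 1 /\
  (forall k : nat, (0 < k < qF ^ 3 - 1)%N -> A ^+ k != 1).

Definition is_plane (P : 'M[F]_(3 + 3)) : bool :=
  (P == <<P>>%MS) && (\rank P == 3)%N.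

Definition pi1 : 'M[F]_(3 + 3) := <<row_mx (0 : 'M[F]_3) 1%:M>>%MS.
Definition pi2 : 'M[F]_(3 + 3) := <<row_mx (1%:M : 'M[F]_3) 0>>%MS.

Definition qform (A : 'M[F]_3) (i : nat) (v : 'rV[F]_(3 + 3)) : F :=
  (lsubmx v *m (A ^+ i) *m (rsubmx v)^T) 0 0.

Definition plane_of_quadric (A : 'M[F]_3) (i : nat) (P : 'M[F]_(3 + 3)) : bool :=
  is_plane P && [forall v : 'rV[F]_(3 + 3), (v <= P)%MS ==> (qform A i v == 0)].

(* G_i : planes of Q_i in the class of pi1 (i.e. meeting pi1 in exactly one
   point, which also excludes pi1 itself) and disjoint from pi2. *)
Definition G_ (A : 'M[F]_3) (i : nat) : {set 'M[F]_(3 + 3)} :=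
  [set P | plane_of_quadric A i P
         & (\rank (P :&: pi1)%MS == 1)%N && (\rank (P :&: pi2)%MS == 0)%N].

Definition code (A : 'M[F]_3) : {set 'M[F]_(3 + 3)} :=
  \bigcup_(i < (qF ^ 2 + qF).+1) G_ A i.

Definition scalarsGL : {set {'GL_(3 + 3)[F]}} :=
  [set g : {'GL_(3 + 3)[F]} | is_scalar_mx (GLval g)].

Definition ZGL : {group {'GL_(3 + 3)[F]}} := (<<scalarsGL>>)%G.

Definition PGL : {set coset_of ZGL} := ([set: {'GL_(3 + 3)[F]}] / ZGL)%g.

(* the collineation induced by an element of PGL acting on subspaces
   (well defined since scalar matrices fix every subspace) *)
Definition pact (c : coset_of ZGL) (P : 'M[F]_(3 + 3)) : 'M[F]_(3 + 3) :=
  <<P *m GLval (repr c)>>%MS.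

End Defs.

From HB Require Import structures.
From mathcomp Require Import all_boot all_order all_algebra all_fingroup finfield.
From mathcomp Require Import zify ring.
Set Implicit Arguments. Unset Strict Implicit. Unset Printing Implicit Defensive.
Import GRing.Theory.
Local Open Scope ring_scope.

(* The group is induced by the block-diagonal matrices diag(A^a, (A^T)^c): there are
   (q^3-1)^2 of them, and q-1 of them are scalar (a = c divisible by m = q^2+q+1, the
   scalar powers of A forming the multiplicative group of F inside the field F[A] of
   order q^3).  Such a matrix fixes pi1 and pi2 and pulls the form X A^j Y^T back to
   X A^(a+j+c) Y^T; as A^m is scalar, it maps G_i into G_(i-a-c mod m), so it preserves
   the code.  A plane of G_i is the row space of [M | I] with M A^i alternating, that
   is M A^i = alt t for a nonzero t in F^3.  Now (A^T)^c alt (t (A^T)^c) A^c = d alt t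
   with d = det (A^c), the scalar matrix d I is a power of A, and <A^T> is transitive on
   the nonzero vectors; hence any two planes of the code differ by a block-diagonal
   matrix. *)

Lemma inj_onto_set (aT rT : finType) (f : aT -> rT) (S : {set rT}) :
  injective f -> (forall x, f x \in S) -> (#|S| <= #|aT|)%N ->
  forall y, y \in S -> exists x, f x = y.
Proof.
move=> f_inj fS cardS y.
have <- : f @: setT = S.
  apply/eqP; rewrite eqEcard card_imset // cardsT cardS andbT.
  by apply/subsetP => _ /imsetP[x _ ->].
by case/imsetP => x _ ->; exists x.
Qed.

Lemma card_ord_dvd n m : (0 < m)%N -> (m %| n)%N ->
  #|[set k : 'I_n | (m %| k)%N]| = (n %/ m)%N.
Proof.
move=> m_gt0 /dvdnP[r ->]; rewrite mulnK //.
have lt_jm (j : 'I_r) : (j * m < r * m)%N by rewrite ltn_pmul2r ?ltn_ord.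
have -> : [set k : 'I_(r * m) | (m %| k)%N] = [set Ordinal (lt_jm j) | j : 'I_r].
  apply/setP => k; rewrite inE; apply/idP/imsetP => [/dvdnP[j ek] | [j _ ->]].
    have lt_jr : (j < r)%N by rewrite -(ltn_pmul2r m_gt0) -ek ltn_ord.
    by exists (Ordinal lt_jr) => //; apply: val_inj.
  exact: dvdn_mull.
rewrite card_imset ?card_ord // => j j' /(congr1 val) /= /eqP.
by rewrite eqn_pmul2r // => /eqP /val_inj.
Qed.

Lemma expn3_pred q : (0 < q)%N -> (q ^ 3 - 1 = (q ^ 2 + q).+1 * (q - 1))%N.
Proof. by move=> q_gt0; rewrite !expnS expn0 !muln1; nia. Qed.

Lemma expf_card_pred (F : finFieldType) (a : F) : a != 0 -> a ^+ #|F|.-1 = 1.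
Proof.
move=> a0; apply: (mulfI a0); rewrite mulr1 -exprS prednK ?expf_card //.
exact: ltnW (finNzRing_gt1 F).
Qed.

Lemma trmxX (R : comPzRingType) n (M : 'M[R]_n) k : (M^T) ^+ k = (M ^+ k)^T.
Proof.
elim: k => [|k IHk]; first by rewrite !expr0 trmx1.
by rewrite exprS exprSr IHk -!mulmxE trmx_mul.
Qed.

Lemma scalar_mx_unit (F : fieldType) n (a : F) : ((a%:M : 'M_n.+1) \in unitmx) = (a != 0).
Proof. by rewrite unitmxE det_scalar unitrX_pos // unitfE. Qed.

Lemma singer_cycle_tr (F : finFieldType) (B : 'M[F]_3) :
  singer_cycle B -> singer_cycle B^T.
Proof.
case=> B_unit [Bn Bmin]; split; first by rewrite unitmx_tr.
split; first by rewrite trmxX Bn trmx1.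
move=> k /Bmin; rewrite trmxX; apply: contra => /eqP Bk1.
by rewrite -(trmxK (B ^+ k)) Bk1 trmx1.
Qed.

Section SingerCycle.
Variables (F : finFieldType) (B : 'M[F]_3).
Hypothesis singerB : singer_cycle B.
Local Notation q := (qF F).
Local Notation n := (q ^ 3 - 1)%N.
Local Notation m := (q ^ 2 + q).+1.

Lemma qF_gt1 : (1 < q)%N. Proof. exact: finNzRing_gt1. Qed.

Lemma singer_order_gt0 : (0 < n)%N.
Proof. by rewrite subn_gt0 -(exp1n 3) ltn_exp2r // qF_gt1. Qed.

Lemma singer_unitX k : B ^+ k \in unitmx.
Proof. by case: singerB => B_unit _; exact: unitrX. Qed.

Lemma singer_expn : B ^+ n = 1.
Proof. by case: singerB => _ []. Qed.

Lemma singer_exp_eq1 k : (B ^+ k == 1) = (n %| k)%N.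
Proof.
apply/idP/idP => [/eqP Bk1 | /dvdnP[l ->]]; last first.
  by rewrite mulnC exprM singer_expn expr1n.
case: singerB => _ [_ Bmin]; apply/negPn/negP => kn.
have /Bmin : (0 < k %% n < n)%N by rewrite lt0n kn ltn_pmod ?singer_order_gt0.
by rewrite expr_mod ?singer_expn // Bk1 eqxx.
Qed.

Lemma singer_exp_inj k l : (k < n)%N -> (l < n)%N -> B ^+ k = B ^+ l -> k = l.
Proof.
wlog le_kl : k l / (k <= l)%N.
  by move=> W; case: (leqP k l) => [/W // | /ltnW /W W' kn ln /esym /W' ->].
move=> lt_kn lt_ln Bkl.
have : B ^+ (l - k) = 1.
  by apply: (mulIr (singer_unitX k)); rewrite mul1r -exprD subnK.
by move/eqP; rewrite singer_exp_eq1 -eqn_mod_dvd // !modn_small // => /eqP.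
Qed.

Let FB := [set X : 'M[F]_3 | (X \in powers_mx B (degree_mxminpoly B))%MS].

Lemma card_FB : (#|FB| <= q ^ 3)%N.
Proof.
have d_le3 : (degree_mxminpoly B <= 3)%N.
  have := dvdp_leq _ (mxminpoly_dvd_char B).
  by rewrite size_char_poly size_mxminpoly; apply; rewrite monic_neq0 ?char_poly_monic.
have : FB \subset [set vec_mx (u *m powers_mx B (degree_mxminpoly B)) | u : 'rV_ _].
  apply/subsetP => X; rewrite inE => /submxP[u Xu].
  by apply/imsetP; exists u; rewrite // -Xu mxvecK.
move/subset_leq_card/leq_trans; apply; apply: leq_trans (leq_imset_card _ _) _.
by rewrite card_mx mul1n leq_exp2l ?qF_gt1.
Qed.

Lemma FB_exp k : B ^+ k \in FB.
Proof.
by rewrite inE; have := horner_mx_mem B ('X ^+ k); rewrite rmorphXn /= horner_mx_X.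
Qed.

Lemma FB_scalar (a : F) : a%:M \in FB.
Proof. by rewrite inE -scalemx1 linearZ /= scalemx_sub // minpoly_mx1. Qed.

Lemma FB_sub X Y : X \in FB -> Y \in FB -> X - Y \in FB.
Proof. by rewrite !inE => FX FY; rewrite linearB /= addmx_sub ?eqmx_opp. Qed.

(* The n distinct powers of B fill the at most q^3 - 1 nonzero elements of F[B]. *)
Lemma FB_expP X : X \in FB -> X != 0 -> exists2 r, (r < n)%N & X = B ^+ r.
Proof.
move=> FX X0.
have FB0 : 0 \in FB by have := FB_scalar 0; rewrite raddf0.
have [|k|||k <-] := @inj_onto_set _ _ (fun k : 'I_n => B ^+ k) (FB :\ 0) _ _ _ X.
- by move=> k l /(singer_exp_inj (ltn_ord k) (ltn_ord l)) /val_inj.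
- rewrite in_setD1 FB_exp andbT; apply: contraTneq (singer_unitX k) => ->.
  by rewrite unitmxE det0 unitr0.
- rewrite card_ord subn1 -ltnS prednK ?expn_gt0 ?(ltnW qF_gt1) //.
  by apply: leq_trans card_FB; rewrite (cardsD1 0 FB) FB0.
- by rewrite in_setD1 X0.
- by exists k.
Qed.

Lemma FB_unit X : X \in FB -> X != 0 -> X \in unitmx.
Proof. by move=> FX /(FB_expP FX)[r _ ->]; exact: singer_unitX. Qed.

Lemma scalar_singer_exp (a : F) : a != 0 -> exists2 r, (r < n)%N & a%:M = B ^+ r.
Proof.
move=> a0; apply: FB_expP (FB_scalar a) _.
by rewrite -scalemx1 scalemx_eq0 negb_or a0 matrix_nonzero1.
Qed.

Lemma singer_orbit_inj (u : 'rV[F]_3) k l : u != 0 -> (k < n)%N -> (l < n)%N ->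
  u *m B ^+ k = u *m B ^+ l -> k = l.
Proof.
wlog le_kl : k l / (k <= l)%N.
  by move=> W; case: (leqP k l) => [/W // | /ltnW /W W' u0 kn ln /esym /W' ->].
move=> u0 lt_kn lt_ln ukl.
have uX0 : u *m (B ^+ (l - k) - 1) = 0.
  have Bk_free : row_free (B ^+ k) by rewrite row_free_unit singer_unitX.
  apply/eqP; rewrite -(mulmx_free_eq0 _ Bk_free).
  by rewrite mulmxBr mulmx1 mulmxBl -mulmxA mulmxE -exprD subnK // ukl subrr.
have [Bkl1 | Bkl1] := eqVneq (B ^+ (l - k)) 1.
  by apply: singer_exp_inj => //; rewrite -(subnK le_kl) exprD Bkl1 mul1r.
have FX : B ^+ (l - k) - 1 \in FB by rewrite -(expr0 B) FB_sub ?FB_exp.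
have : B ^+ (l - k) - 1 \in unitmx by rewrite FB_unit // subr_eq0.
by rewrite -row_free_unit => /mulmx_free_eq0 free; rewrite -free uX0 eqxx in u0.
Qed.

Lemma singer_orbit_transitive (u v : 'rV[F]_3) : u != 0 -> v != 0 ->
  exists c, u *m B ^+ c = v.
Proof.
move=> u0 v0.
have [|k|||k <-] := @inj_onto_set _ _ (fun k : 'I_n => u *m B ^+ k) [set~ 0] _ _ _ v.
- by move=> k l /(singer_orbit_inj u0 (ltn_ord k) (ltn_ord l)) /val_inj.
- rewrite !inE; apply: contraNneq u0 => /eqP.
  by rewrite mulmx_free_eq0 // row_free_unit singer_unitX.
- by rewrite cardsC1 card_mx mul1n card_ord subn1.
- by rewrite !inE.
- by exists k.
Qed.

Lemma singer_scalar_exp_dvd k : is_scalar_mx (B ^+ k) -> (m %| k)%N.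
Proof.
case/is_scalar_mxP => a Bka.
have a0 : a != 0 by rewrite -(@scalar_mx_unit _ 2) -Bka singer_unitX.
have /eqP : B ^+ (k * (q - 1)) = 1 by rewrite exprM Bka -rmorphXn /= subn1 expf_card_pred.
by rewrite singer_exp_eq1 (expn3_pred (ltnW qF_gt1)) dvdn_pmul2r // subn_gt0 qF_gt1.
Qed.

Lemma card_singer_scalar_exp : (q - 1 <= #|[set k : 'I_n | is_scalar_mx (B ^+ k)]|)%N.
Proof.
set S := [set k : 'I_n | is_scalar_mx (B ^+ k)].
have : [set~ 0] \subset [set (B ^+ k) 0 0 | k : 'I_n in S].
  apply/subsetP => a; rewrite !inE => /scalar_singer_exp[r lt_rn Bra].
  apply/imsetP; exists (Ordinal lt_rn); first by rewrite inE /= -Bra scalar_mx_is_scalar.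
  by rewrite /= -Bra mxE.
move/subset_leq_card; rewrite cardsC1 -subn1 => /leq_trans; apply.
exact: leq_imset_card.
Qed.

Lemma singer_scalar_expE k : is_scalar_mx (B ^+ k) = (m %| k)%N.
Proof.
have n_eq : n = (m * (q - 1))%N := expn3_pred (ltnW qF_gt1).
have m_dvd_n : (m %| n)%N by rewrite n_eq dvdn_mulr.
have scalar_ord_dvd : [set j : 'I_n | is_scalar_mx (B ^+ j)] = [set j : 'I_n | (m %| j)%N].
  apply/eqP; rewrite eqEcard card_ord_dvd //.
  have -> : (n %/ m = q - 1)%N by rewrite n_eq mulKn // subn_gt0 qF_gt1.
  rewrite card_singer_scalar_exp andbT.
  by apply/subsetP => j; rewrite !inE; exact: singer_scalar_exp_dvd.
move/setP/(_ (Ordinal (ltn_pmod k singer_order_gt0))): scalar_ord_dvd.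
by rewrite !inE /= expr_mod ?singer_expn // /dvdn modn_dvdm.
Qed.

End SingerCycle.

Section AlternatingForms.
Variable F : fieldType.

Definition i0 : 'I_3 := Ordinal (isT : (0 < 3)%N).
Definition i1 : 'I_3 := Ordinal (isT : (1 < 3)%N).
Definition i2 : 'I_3 := Ordinal (isT : (2 < 3)%N).

Lemma ord3P (i : 'I_3) : [\/ i = i0, i = i1 | i = i2].
Proof.
by case: i => [[|[|[|//]]] lti]; [apply: Or31 | apply: Or32 | apply: Or33]; apply: val_inj.
Qed.

Lemma sum3 (f : 'I_3 -> F) : \sum_(k < 3) f k = f i0 + f i1 + f i2.
Proof.
rewrite !big_ord_recr big_ord0 /= add0r.
by congr (f _ + f _ + f _); apply: val_inj.
Qed.

(* The alternating form with matrix [alt t] is (x, y) |-> det (x; y; t). *)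
Definition alt (t : 'rV[F]_3) : 'M[F]_3 :=
  \matrix_(i, j) (nth [::] [:: [:: 0; t 0 i2; - t 0 i1];
                              [:: - t 0 i2; 0; t 0 i0];
                              [:: t 0 i1; - t 0 i0; 0]] i)`_j.

Lemma alt_eq0 t : (alt t == 0) = (t == 0).
Proof.
apply/eqP/eqP => [/matrixP alt0 | ->]; last first.
  apply/matrixP => i j; rewrite !mxE.
  by case: (ord3P i) => ->; case: (ord3P j) => -> /=; rewrite ?oppr0.
apply/matrixP => i j; rewrite ord1 mxE.
have := alt0 i1 i2; have := alt0 i2 i0; have := alt0 i0 i1; rewrite !mxE /=.
by case: (ord3P j) => ->.
Qed.

(* The scalar is [\det P]: this is the cofactor identity for 3 x 3 matrices. *)
Lemma alt_congr (P : 'M[F]_3) t : exists d, P *m alt (t *m P) *m P^T = d *: alt t.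
Proof.
exists (P i0 i0 * (P i1 i1 * P i2 i2 - P i1 i2 * P i2 i1)
      - P i0 i1 * (P i1 i0 * P i2 i2 - P i1 i2 * P i2 i0)
      + P i0 i2 * (P i1 i0 * P i2 i1 - P i1 i1 * P i2 i0)).
apply/matrixP => i j.
by case: (ord3P i) => ->; case: (ord3P j) => ->; rewrite !(mxE, sum3) /=; ring.
Qed.

Lemma alternating_alt (N : 'M[F]_3) :
  (forall y : 'rV[F]_3, (y *m N *m y^T) 0 0 = 0) -> exists t, N = alt t.
Proof.
pose row3 a b c : 'rV[F]_3 := \row_k [:: a; b; c]`_k.
have qE a b c : (row3 a b c *m N *m (row3 a b c)^T) 0 0 =
    a * a * N i0 i0 + a * b * (N i0 i1 + N i1 i0) + a * c * (N i0 i2 + N i2 i0)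
    + b * b * N i1 i1 + b * c * (N i1 i2 + N i2 i1) + c * c * N i2 i2.
  by rewrite !(mxE, sum3) /=; ring.
move=> Nalt; exists (row3 (N i1 i2) (N i2 i0) (N i0 i1)).
have N00 : N i0 i0 = 0 by rewrite -(Nalt (row3 1 0 0)) qE; ring.
have N11 : N i1 i1 = 0 by rewrite -(Nalt (row3 0 1 0)) qE; ring.
have N22 : N i2 i2 = 0 by rewrite -(Nalt (row3 0 0 1)) qE; ring.
have N10 : N i1 i0 = - N i0 i1.
  by apply/eqP; rewrite -subr_eq0 opprK -(Nalt (row3 1 1 0)) qE N00 N11; apply/eqP; ring.
have N20 : N i2 i0 = - N i0 i2.
  by apply/eqP; rewrite -subr_eq0 opprK -(Nalt (row3 1 0 1)) qE N00 N22; apply/eqP; ring.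
have N21 : N i2 i1 = - N i1 i2.
  by apply/eqP; rewrite -subr_eq0 opprK -(Nalt (row3 0 1 1)) qE N11 N22; apply/eqP; ring.
apply/matrixP => i j; rewrite !mxE.
by case: (ord3P i) => ->; case: (ord3P j) => -> /=;
  rewrite ?mxE /= ?N00 ?N11 ?N22 ?N10 ?N20 ?N21 ?opprK.
Qed.

End AlternatingForms.

Section Subspaces.
Variable F : fieldType.

Lemma rank_row_mx1 m n (M : 'M[F]_(m, n)) : \rank (row_mx M 1%:M) = m.
Proof.
have M1_inv : row_mx M 1%:M *m col_mx 0 1%:M = 1%:M.
  by rewrite mul_row_col mulmx0 add0r mulmx1.
apply/eqP; rewrite eqn_leq rank_leq_row -{1}(mxrank1 F m) -{1}M1_inv.
exact: mxrankM_maxl.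
Qed.

Lemma genmxMr_inj n (g P Q : 'M[F]_n) : g \in unitmx ->
  P = <<P>>%MS -> Q = <<Q>>%MS -> <<P *m g>>%MS = <<Q *m g>>%MS -> P = Q.
Proof.
move=> g_unit eP eQ /genmxP/eqmxP/(eqmxMr (invmx g)).
by rewrite !mulmxK // => /eq_genmx; rewrite -eP -eQ.
Qed.

Lemma mxrank_cap_genMr n (X V g : 'M[F]_n) : g \in unitmx -> (V *m g :=: V)%MS ->
  \rank (<<X *m g>> :&: V)%MS = \rank (X :&: V)%MS.
Proof.
move=> g_unit Vg; have g_free : row_free g by rewrite row_free_unit.
have rkXg : \rank <<X *m g>>%MS = \rank X by rewrite genmxE mxrankMfree.
have rk_sum : \rank (<<X *m g>> + V)%MS = \rank (X + V)%MS.
  by rewrite (adds_eqmx (genmxE _) (eqmx_sym Vg)) -addsmxMr mxrankMfree.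
have := mxrank_sum_cap <<X *m g>>%MS V; rewrite rk_sum rkXg -(mxrank_sum_cap X V).
by move/eqP; rewrite eqn_add2l => /eqP.
Qed.

End Subspaces.

Section Quadrics.
Variables (F : finFieldType) (A : 'M[F]_3).
Hypothesis singerA : singer_cycle A.
Local Notation q := (qF F).
Local Notation n := (q ^ 3 - 1)%N.
Local Notation m := (q ^ 2 + q).+1.

Lemma rank_pi1 : \rank (pi1 F) = 3%N.
Proof. by rewrite genmxE rank_row_0mx mxrank1. Qed.

Lemma rank_pi2 : \rank (pi2 F) = 3%N.
Proof. by rewrite genmxE rank_row_mx0 mxrank1. Qed.

Lemma plane_disjoint_pi2 P : is_plane P -> \rank (P :&: pi2 F)%MS = 0%N ->
  exists M, P = <<row_mx M 1%:M>>%MS.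
Proof.
case/andP => /eqP eP /eqP rkP rkPpi2.
have : row_full (P + pi2 F)%MS.
  have := mxrank_sum_cap P (pi2 F); rewrite rkPpi2 rkP rank_pi2 addn0.
  by rewrite /row_full => ->.
move/(submx_full (row_mx 0 1%:M))/sub_addsmxP => [u].
have : (u.2 *m pi2 F <= row_mx (1%:M : 'M[F]_3) 0)%MS.
  by apply: submx_trans (submxMl _ _) _; rewrite genmxE.
case/submxP => z ->; rewrite mul_mx_row mulmx1 mulmx0 => e.
have uP : u.1 *m P = row_mx (- z) 1%:M.
  by apply/(addIr (row_mx z 0)); rewrite -e add_row_mx addNr addr0.
exists (- z); rewrite eP; apply/genmxP.
have sub : (row_mx (- z) 1%:M <= P)%MS by rewrite -uP submxMl.
apply/andP; split => //.
by rewrite -(geq_leqif (mxrank_leqif_sup sub)) rank_row_mx1 rkP.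
Qed.

Lemma qform_row_mx1 i M (y : 'rV[F]_3) :
  qform A i (y *m row_mx M 1%:M) = (y *m (M *m A ^+ i) *m y^T) 0 0.
Proof. by rewrite /qform mul_mx_row mulmx1 row_mxKl row_mxKr !mulmxA. Qed.

Lemma G_alt i P : P \in G_ A i ->
  exists M t, [/\ P = <<row_mx M 1%:M>>%MS, M *m A ^+ i = alt t & t != 0].
Proof.
rewrite inE => /andP[/andP[plP onQ] /andP[rkPpi1 /eqP rkPpi2]].
have [M eP] := plane_disjoint_pi2 plP rkPpi2.
have [|t Mt] := @alternating_alt _ (M *m A ^+ i).
  move=> y; rewrite -qform_row_mx1; apply/eqP.
  by apply: (implyP (forallP onQ _)); rewrite eP genmxE submxMl.
exists M, t; split=> //; apply: contraTneq rkPpi1 => t0.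
have : M *m A ^+ i == 0 by rewrite Mt t0 alt_eq0.
rewrite mulmx_free_eq0 ?row_free_unit ?singer_unitX // => /eqP M0.
by rewrite eP M0 -/(pi1 F) (capmx_idPr (submx_refl _)) rank_pi1.
Qed.

Definition bdiag a c : 'M[F]_(3 + 3) := block_mx (A ^+ a) 0 0 ((A^T) ^+ c).

Lemma bdiag_unit a c : bdiag a c \in unitmx.
Proof.
rewrite unitmxE det_ublock unitrM -!unitmxE.
by rewrite (singer_unitX singerA) (singer_unitX (singer_cycle_tr singerA)).
Qed.

Lemma bdiagM a c a' c' : bdiag a c *m bdiag a' c' = bdiag (a + a') (c + c').
Proof. by rewrite mulmx_block !mulmx0 !mul0mx !addr0 !add0r !mulmxE -!exprD. Qed.

Lemma bdiag_mod a c : bdiag (a %% n) (c %% n) = bdiag a c.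
Proof.
by rewrite /bdiag !expr_mod ?(singer_expn singerA) ?(singer_expn (singer_cycle_tr singerA)).
Qed.

Lemma bdiag_inj a c a' c' : (a < n)%N -> (c < n)%N -> (a' < n)%N -> (c' < n)%N ->
  bdiag a c = bdiag a' c' -> a = a' /\ c = c'.
Proof.
move=> lt_an lt_cn lt_a'n lt_c'n e; split.
  by apply: (singer_exp_inj singerA) => //; move/(congr1 ulsubmx): e; rewrite !block_mxKul.
apply: (singer_exp_inj (singer_cycle_tr singerA)) => //.
by move/(congr1 drsubmx): e; rewrite !block_mxKdr.
Qed.

Lemma pi1_bdiag a c : (pi1 F *m bdiag a c :=: pi1 F)%MS.
Proof.
apply: eqmx_trans (eqmxMr _ (genmxE _)) _.
rewrite mul_row_block !mulmx0 !mul0mx mul1mx addr0 add0r.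
have -> : row_mx (0 : 'M[F]_3) ((A^T) ^+ c) = (A^T) ^+ c *m row_mx 0 1%:M.
  by rewrite mul_mx_row mulmx0 mulmx1.
apply: eqmx_trans (eqmxMfull _ _) (eqmx_sym (genmxE _)).
by rewrite row_full_unit (singer_unitX (singer_cycle_tr singerA)).
Qed.

Lemma pi2_bdiag a c : (pi2 F *m bdiag a c :=: pi2 F)%MS.
Proof.
apply: eqmx_trans (eqmxMr _ (genmxE _)) _.
rewrite mul_row_block !mulmx0 !mul0mx mul1mx addr0 add0r.
have -> : row_mx (A ^+ a) (0 : 'M[F]_3) = A ^+ a *m row_mx 1%:M 0.
  by rewrite mul_mx_row mulmx0 mulmx1.
apply: eqmx_trans (eqmxMfull _ _) (eqmx_sym (genmxE _)).
by rewrite row_full_unit (singer_unitX singerA).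
Qed.

Lemma qform_bdiag j a c (w : 'rV[F]_(3 + 3)) :
  qform A j (w *m bdiag a c) = qform A (a + j + c) w.
Proof.
rewrite -{1}(hsubmxK w) mul_row_block !mulmx0 addr0 add0r /qform row_mxKl row_mxKr.
by rewrite trmx_mul trmxX trmxK !mulmxA -!(mulmxA (lsubmx w)) !mulmxE -!exprD.
Qed.

(* [A ^+ m] is a nonzero scalar. *)
Lemma qform_eq0_mod k l w : k = l %[mod m] -> (qform A k w == 0) = (qform A l w == 0).
Proof.
wlog le_kl : k l / (k <= l)%N.
  by move=> W; case: (leqP k l) => [/W // | /ltnW /W W' /esym /W' ->].
move/eqP; rewrite eq_sym eqn_mod_dvd // => /dvdnP[t lk].
have /is_scalar_mxP[mu Am] : is_scalar_mx (A ^+ m) by rewrite singer_scalar_expE.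
have mu0 : mu != 0 by rewrite -(@scalar_mx_unit _ 2) -Am singer_unitX.
rewrite -(subnK le_kl) lk mulnC /qform exprD exprM Am -rmorphXn -mulmxE mul_scalar_mx.
rewrite -scalemxAr -scalemxAl [X in _ = (X == 0)]mxE.
by rewrite mulf_eq0 expf_eq0 (negPf mu0) andbF.
Qed.

(* The new index is [i - (a + c)] modulo [m]. *)
Lemma G_bdiag i a c P : P \in G_ A i ->
  <<P *m bdiag a c>>%MS \in G_ A ((i + (a + c) * m.-1) %% m).
Proof.
rewrite !inE => /andP[/andP[/andP[/eqP eP /eqP rkP] onQ] /andP[rk1 rk0]].
have g_unit := bdiag_unit a c.
rewrite /plane_of_quadric /is_plane genmx_id eqxx genmxE.
rewrite mxrankMfree ?row_free_unit // rkP /=.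
rewrite (mxrank_cap_genMr _ g_unit (pi1_bdiag a c)) rk1.
rewrite (mxrank_cap_genMr _ g_unit (pi2_bdiag a c)) rk0.
apply/andP; split => //; apply/forallP => v; apply/implyP; rewrite genmxE => /submxP[u ->].
rewrite mulmxA qform_bdiag (@qform_eq0_mod _ i).
  exact: (implyP (forallP onQ _) (submxMl _ _)).
rewrite -modnDml modnDmr modnDml.
have -> : (a + (i + (a + c) * m.-1) + c = (a + c) * m + i)%N by rewrite /=; lia.
exact: modnMDl.
Qed.

Lemma code_bdiag a c P : P \in code A -> <<P *m bdiag a c>>%MS \in code A.
Proof.
case/bigcupP => i _ /(G_bdiag a c) PG.
by apply/bigcupP; exists (Ordinal (ltn_pmod (i + (a + c) * m.-1) (ltn0Sn _))).
Qed.

Lemma code_genmx P : P \in code A -> P = <<P>>%MS.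
Proof. by case/bigcupP => i _; rewrite inE => /andP[/andP[/andP[/eqP]]]. Qed.

Lemma imset_code_bdiag a c : [set <<P *m bdiag a c>>%MS | P in code A] = code A.
Proof.
apply/eqP; rewrite eqEcard card_in_imset ?leqnn ?andbT.
  by apply/subsetP => _ /imsetP[P PC ->]; exact: code_bdiag.
move=> P Q PC QC; apply: genmxMr_inj (bdiag_unit a c) _ _ => //; exact: code_genmx.
Qed.

Lemma bdiag_alt_transitive i j M M' t t' :
  M *m A ^+ i = alt t -> M' *m A ^+ j = alt t' -> t != 0 -> t' != 0 ->
  exists a c, row_mx M 1%:M *m bdiag a c = (A ^+ c)^T *m row_mx M' 1%:M.
Proof.
move=> Mt Mt' t0 t'0.
have [c tc] := singer_orbit_transitive (singer_cycle_tr singerA) t0 t'0.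
have [d] := alt_congr ((A^T) ^+ c) t; rewrite tc trmxX trmxK -Mt -Mt' => congrP.
have d0 : d != 0.
  apply: contraNneq t'0 => d0; move/eqP: congrP; rewrite d0 scale0r Mt'.
  rewrite mulmx_free_eq0 ?row_free_unit ?singer_unitX // => /eqP PX0.
  have Pu : (A ^+ c)^T \in unitmx by rewrite unitmx_tr singer_unitX.
  by rewrite -alt_eq0 -(mulKmx Pu (alt t')) PX0 mulmx0.
have [r _ dAr] := scalar_singer_exp singerA d0.
exists (i + r + n.-1 * (j + c))%N, c.
rewrite mul_row_block mul_mx_row !mulmx0 !mulmx1 mul1mx addr0 add0r trmxX; congr row_mx.
apply: (can_inj (mulmxK (singer_unitX singerA (j + c)))).
rewrite -mulmxA mulmxE -exprD.
have -> : (i + r + n.-1 * (j + c) + (j + c) = r + i + n * (j + c))%N.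
  by have := singer_order_gt0 F; nia.
rewrite !exprD exprM (singer_expn singerA) expr1n mulr1 [RHS]mulrA -[in RHS](mulrA _ M').
by rewrite -!mulmxE congrP -dAr mul_scalar_mx scalemxAr.
Qed.

Lemma G_transitive i j P Q : P \in G_ A i -> Q \in G_ A j ->
  exists a c, <<P *m bdiag a c>>%MS = Q.
Proof.
case/G_alt => M [t [-> Mt t0]]; case/G_alt => M' [t' [-> Mt' t'0]].
have [a [c Mac]] := bdiag_alt_transitive Mt Mt' t0 t'0.
exists a, c; apply: eq_genmx; apply: eqmx_trans (eqmxMr _ (genmxE _)) _.
by rewrite Mac; apply: eqmxMfull; rewrite row_full_unit unitmx_tr singer_unitX.
Qed.

Lemma code_transitive P Q : P \in code A -> Q \in code A ->
  exists a c, <<P *m bdiag a c>>%MS = Q.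
Proof. by case/bigcupP => i _ PG /bigcupP[j _ QG]; exact: G_transitive PG QG. Qed.

End Quadrics.

Section ProjectiveGroup.
Variable F : finFieldType.

Lemma scalarsGL_group : group_set (scalarsGL F).
Proof.
apply/group_setP; split; first by rewrite inE scalar_mx_is_scalar.
move=> x y; rewrite !inE => /is_scalar_mxP[a xa] /is_scalar_mxP[b yb].
by rewrite GL_MxE xa yb -scalar_mxM scalar_mx_is_scalar.
Qed.

Lemma ZGLE : ZGL F = scalarsGL F :> {set _}.
Proof. exact: gen_set_id scalarsGL_group. Qed.

Lemma ZGL_scalar x : x \in ZGL F -> exists2 a : F, a != 0 & GLval x = a%:M.
Proof.
rewrite ZGLE inE => /is_scalar_mxP[a xa]; exists a => //.
by have := GL_unitmx x; rewrite /= xa scalar_mx_unit.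
Qed.

Lemma ZGL_norm : ([set: {'GL_(3 + 3)[F]}] \subset 'N(ZGL F))%g.
Proof.
apply/cents_norm/centsP => x _ z /ZGL_scalar[a _ za].
apply: val_inj; change (GLval (x * z)%g = GLval (z * x)%g).
by rewrite !GL_MxE za scalar_mxC.
Qed.

Lemma pact_coset x P : pact (coset (ZGL F) x) P = <<P *m GLval x>>%MS.
Proof.
rewrite /pact; have := mem_repr_coset (coset (ZGL F) x).
rewrite val_coset ?(subsetP ZGL_norm) ?inE // => /rcosetP[z /ZGL_scalar[a a0 za] ->].
by rewrite GL_MxE za mul_scalar_mx -scalemxAr; apply/eq_genmx/eqmx_scale.
Qed.

End ProjectiveGroup.

Section BlockDiagonalGroup.
Variables (F : finFieldType) (A : 'M[F]_3).
Hypothesis singerA : singer_cycle A.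
Local Notation q := (qF F).
Local Notation n := (q ^ 3 - 1)%N.
Local Notation m := (q ^ 2 + q).+1.
Local Notation bdiag := (bdiag A).

Lemma bdiag_scalarE a c : (a < n)%N -> (c < n)%N ->
  is_scalar_mx (bdiag a c) = (a == c) && (m %| a)%N.
Proof.
move=> lt_an lt_cn; apply/idP/andP => [/is_scalar_mxP[l] | [/eqP <-]].
  rewrite [l%:M]scalar_mx_block => /[dup] /(congr1 ulsubmx) + /(congr1 drsubmx).
  rewrite !block_mxKul !block_mxKdr trmxX => Aa.
  rewrite -[l%:M]tr_scalar_mx => /trmx_inj Ac.
  split; last by rewrite -(singer_scalar_expE singerA) Aa scalar_mx_is_scalar.
  by apply/eqP/(singer_exp_inj singerA) => //; rewrite Aa Ac.
rewrite -(singer_scalar_expE singerA) => /is_scalar_mxP[l Aa].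
by rewrite /bdiag trmxX Aa tr_scalar_mx -scalar_mx_block scalar_mx_is_scalar.
Qed.

Definition bdiagGL a c : {'GL_(3 + 3)[F]} := Sub (bdiag a c) (bdiag_unit singerA a c).

Lemma bdiagGLM a c a' c' : (bdiagGL a c * bdiagGL a' c')%g = bdiagGL (a + a') (c + c').
Proof. by apply: val_inj; rewrite /= -bdiagM. Qed.

Definition Kbdiag : {set {'GL_(3 + 3)[F]}} :=
  [set bdiagGL p.1 p.2 | p : 'I_n * 'I_n].

Lemma bdiagGL_K a c : bdiagGL a c \in Kbdiag.
Proof.
have -> : bdiagGL a c = bdiagGL (a %% n) (c %% n) by apply: val_inj; rewrite /= bdiag_mod.
apply/imsetP; have n_gt0 := singer_order_gt0 F.
by exists (Ordinal (ltn_pmod a n_gt0), Ordinal (ltn_pmod c n_gt0)).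
Qed.

Lemma Kbdiag_group : group_set Kbdiag.
Proof.
apply/group_setP; split.
  suff -> : 1%g = bdiagGL 0 0 by exact: bdiagGL_K.
  by apply: val_inj; rewrite /= /bdiag !expr0 -scalar_mx_block.
by move=> _ _ /imsetP[p _ ->] /imsetP[p' _ ->]; rewrite bdiagGLM bdiagGL_K.
Qed.

Canonical Kbdiag_grp := Group Kbdiag_group.

Lemma card_Kbdiag : #|Kbdiag| = (n * n)%N.
Proof.
rewrite card_imset ?card_prod ?card_ord // => [[a c] [a' c']] /(congr1 val) /= e.
have [] := bdiag_inj singerA (ltn_ord a) (ltn_ord c) (ltn_ord a') (ltn_ord c') e.
by move=> /val_inj -> /val_inj ->.
Qed.

Lemma card_Kbdiag_ZGL : #|Kbdiag :&: ZGL F| = (q - 1)%N.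
Proof.
have -> : Kbdiag :&: ZGL F = [set bdiagGL k k | k : 'I_n in [set k : 'I_n | (m %| k)%N]].
  apply/setP => x; rewrite !inE ZGLE inE; apply/andP/imsetP => [[]|[k]].
    case/imsetP=> [[a c] _ ->]; rewrite /= bdiag_scalarE // => /andP[/eqP ac mk].
    by exists a; rewrite ?inE // ac.
  by rewrite inE => mk ->; rewrite bdiagGL_K /= bdiag_scalarE ?eqxx.
rewrite card_in_imset => [|k l _ _ /(congr1 val) e]; last first.
  by case: (bdiag_inj singerA (ltn_ord k) (ltn_ord k) (ltn_ord l) (ltn_ord l) e)
    => /val_inj.
have n_eq : n = (m * (q - 1))%N := expn3_pred (ltnW (qF_gt1 F)).
rewrite card_ord_dvd //; last by rewrite n_eq dvdn_mulr.
by rewrite n_eq mulKn.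
Qed.

Lemma card_Kbdiag_quo : #|(Kbdiag_grp / ZGL F)%g| = (n * m)%N.
Proof.
rewrite card_quotient; last exact: subset_trans (subsetT _) (ZGL_norm F).
rewrite -indexgI; apply/eqP.
have q1_gt0 : (0 < q - 1)%N by rewrite subn_gt0 qF_gt1.
rewrite -(eqn_pmul2l q1_gt0) -{1}card_Kbdiag_ZGL (Lagrange (subsetIl _ _)) card_Kbdiag.
by rewrite {1}(expn3_pred (ltnW (qF_gt1 F))); apply/eqP; nia.
Qed.

End BlockDiagonalGroup.

Theorem corollary4p9 (F : finFieldType) (A : 'M[F]_3) :
  singer_cycle A ->
  exists H : {group coset_of (ZGL F)},
    [/\ H \subset PGL F,
        #|H| = ((qF F ^ 3 - 1) * (qF F ^ 2 + qF F + 1))%N,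
        (forall h, h \in H -> [set pact h P | P in code A] = code A)
      & (forall P Q, P \in code A -> Q \in code A ->
           exists2 h, h \in H & pact h P = Q)].
Proof.
move=> singerA; exists (Kbdiag_grp singerA / ZGL F)%G; split.
- exact/quotientS/subsetT.
- by rewrite card_Kbdiag_quo addn1.
- move=> _ /morphimP[_ _ /imsetP[[a c] _ ->] ->].
  rewrite -[RHS](imset_code_bdiag singerA a c); apply: eq_imset => P.
  exact: pact_coset.
- move=> P Q PC QC; have [a [c <-]] := code_transitive singerA PC QC.
  exists (coset (ZGL F) (bdiagGL singerA a c)); first exact/mem_quotient/bdiagGL_K.
  exact: pact_coset.
Qed.
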